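(* Let $d>0$, $K_z>0$, $K_x>0$, $k>0$, $\sigma>0$, $l>0$, $\rho\ge0$, let $S:\mathbb{R}\to\mathbb{R}$ be a smooth odd saturating function with $S(0)=0$, $S'(0)=1$, let $\eta(z)=\exp(-z^2/(2\sigma^2))$, and consider the scalar equilibrium bifurcation problem $$g(z,d,u,b,K_x,K_z,k,\sigma,\rho,l) := (1-\eta(z))\,K_x\!\left(\frac{\rho}{l}\tanh(kz) - z - \frac{dz-uS(z)+b}{K_z\eta(z)}\right) - \frac{dz-uS(z)+b}{K_z} = 0$$ with $b$ as bifurcation parameter, $u>d$ close to $d$, and its two saddle-node bifurcation points $(z_1^*,b_1^* )$ with $z_1^*>0>b_1^*$ and $(z_2^*,b_2^* )$ with $z_2^*<0<b_2^*$. Then varying $u$ changes the size of the bistable region (the interval $(b_1^*,b_2^* )$ of $b$ values) by moving these saddle points: $\partial b_1^*/\partial u<0$ and $\partial b_2^*/\partial u>0$, so larger $u$ gives a larger bistable region (a larger input $|b|$ is required for switching) and smaller $u$ gives a smaller bistable region (a smaller input is required for switching).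
   Context: Zeros of $g$ correspond to equilibria of the opinion–position system $\dot z=-dz+uS(z)+b-K_z\eta(z)(z-x)$, $\dot x=(1-\eta(z))K_x(\frac{\rho}{l}\tanh(kz)-x)-\eta(z)(x-z)$, where $z$ is an agent's opinion between two tasks, $x$ its position, $u$ an attention gain and $b$ a bias; ''switching'' means the opinion changing sign when $b$ crosses a saddle-node value. *)

From Stdlib Require Import Reals Lra.
From Coquelicot Require Import Coquelicot.
Open Scope R_scope.

(* "S is a smooth odd saturating function with S(0)=0, S'(0)=1":
   smooth = derivatives of every order exist everywhere; odd;
   saturating = bounded and strictly increasing (S' > 0). *)
Definition saturating_sigmoid (S : R -> R) : Prop :=
  (forall n x, ex_derive_n S n x) /\
  (forall x, S (- x) = - S x) /\
  S 0 = 0 /\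
  Derive S 0 = 1 /\
  (forall x, 0 < Derive S x) /\
  (exists M, forall x, Rabs (S x) <= M).

Definition eta (sigma z : R) : R := exp (- (z ^ 2) / (2 * sigma ^ 2)).

Definition g (S : R -> R) (z d u b Kx Kz k sigma rho l : R) : R :=
  (1 - eta sigma z) * Kx *
    (rho / l * tanh (k * z) - z - (d * z - u * S z - b) / (Kz * eta sigma z))
  - (d * z - u * S z - b) / Kz.

Definition saddle_node (S : R -> R) (d u Kx Kz k sigma rho l : R) (z b : R) : Prop :=
  g S z d u b Kx Kz k sigma rho l = 0 /\
  Derive_n (fun w => g S w d u b Kx Kz k sigma rho l) 1 z = 0 /\
  Derive_n (fun w => g S w d u b Kx Kz k sigma rho l) 2 z <> 0 /\
  Derive (fun c => g S z d u c Kx Kz k sigma rho l) b <> 0.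

(* Along a saddle-node branch, [g] depends on [u] and [b] only through the
   input [d z - u S(z) - b], which enters with a positive gain.  Implicit
   differentiation of [g(z(u), u, b(u)) = 0], in which the [z]-term drops out
   because [dg/dz = 0] at a saddle node, gives [b'(u) = - S(z(u))].  As [S] is
   strictly increasing with [S 0 = 0], this is negative on the branch with
   [z > 0] and positive on the branch with [z < 0], for every [u]. *)
From Stdlib Require Import Reals Lra.
From Coquelicot Require Import Coquelicot.
Open Scope R_scope.

Lemma eta_pos (sigma z : R) : 0 < eta sigma z.
Proof. apply exp_pos. Qed.

Lemma eta_le_1 (sigma z : R) : 0 < sigma -> eta sigma z <= 1.
Proof.
  intros Hsigma. unfold eta. rewrite <- exp_0.
  assert (0 < 2 * sigma ^ 2) by nra.
  assert (0 <= z ^ 2 / (2 * sigma ^ 2)) by (apply Rdiv_le_0_compat; nra).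
  assert (Hexp : - z ^ 2 / (2 * sigma ^ 2) <= 0) by (unfold Rdiv in *; lra).
  destruct (Rle_lt_or_eq_dec _ _ Hexp) as [Hlt | ->].
  - left. apply exp_increasing, Hlt.
  - apply Rle_refl.
Qed.

Definition input_gain (Kx Kz sigma w : R) : R :=
  (1 - eta sigma w) * Kx / (Kz * eta sigma w) + 1 / Kz.

Lemma input_gain_pos (Kx Kz sigma w : R) :
  0 < Kx -> 0 < Kz -> 0 < sigma -> 0 < input_gain Kx Kz sigma w.
Proof.
  intros HKx HKz Hsigma. unfold input_gain.
  pose proof (eta_pos sigma w). pose proof (eta_le_1 sigma w Hsigma).
  assert (0 <= (1 - eta sigma w) * Kx / (Kz * eta sigma w))
    by (apply Rdiv_le_0_compat; nra).
  assert (0 < 1 / Kz) by (apply Rdiv_lt_0_compat; lra).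
  lra.
Qed.

Lemma ex_derive_input_gain (Kx Kz sigma w : R) :
  0 < Kz -> ex_derive (input_gain Kx Kz sigma) w.
Proof.
  intros HKz. unfold input_gain, eta. auto_derive.
  apply Rgt_not_eq, Rmult_lt_0_compat; [lra | apply exp_pos].
Qed.

Lemma g_shift (S : R -> R) (w d u b u0 b0 Kx Kz k sigma rho l : R) :
  0 < Kz ->
  g S w d u b Kx Kz k sigma rho l =
  g S w d u0 b0 Kx Kz k sigma rho l
  + ((u - u0) * S w + (b - b0)) * input_gain Kx Kz sigma w.
Proof.
  intros HKz. unfold g, input_gain.
  (* opaque to [field], which would otherwise require [l <> 0] *)
  set (position := rho / l * tanh (k * w)).
  pose proof (eta_pos sigma w). field; split; apply Rgt_not_eq; lra.
Qed.

Lemma ex_derive_g (S : R -> R) (w d u b Kx Kz k sigma rho l : R) :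
  (forall x, ex_derive S x) -> 0 < Kz ->
  ex_derive (fun v => g S v d u b Kx Kz k sigma rho l) w.
Proof.
  intros HS HKz. unfold g, eta, tanh, sinh, cosh. auto_derive.
  pose proof (exp_pos (k * w)). pose proof (exp_pos (- (k * w))).
  repeat split; auto; apply Rgt_not_eq.
  - lra.
  - apply Rmult_lt_0_compat; [lra | apply exp_pos].
Qed.

Lemma saturating_sigmoid_increasing (S : R -> R) (x y : R) :
  saturating_sigmoid S -> x < y -> S x < S y.
Proof.
  intros [Hsmooth [_ [_ [_ [HS' _]]]]] Hxy.
  apply (incr_function S m_infty p_infty (Derive S)); simpl; auto.
  - intros v _ _. apply Derive_correct, (Hsmooth 1%nat v).
  - intros v _ _. apply HS'.
Qed.

Lemma implicit_branch_derive (G s C z b : R -> R) (u0 eps : R) :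
  is_derive G (z u0) 0 -> ex_derive s (z u0) -> ex_derive C (z u0) ->
  C (z u0) <> 0 -> ex_derive z u0 -> ex_derive b u0 -> 0 < eps ->
  (forall u, Rabs (u - u0) < eps ->
     G (z u) + ((u - u0) * s (z u) + (b u - b u0)) * C (z u) = 0) ->
  Derive b u0 = - s (z u0).
Proof.
  intros HG Hs HC HC0 Hz Hb Heps Hbranch.
  set (h u := G (z u) + ((u - u0) * s (z u) + (b u - b u0)) * C (z u)).
  assert (Hh : is_derive h u0 ((s (z u0) + Derive b u0) * C (z u0))).
  { unfold h. auto_derive.
    - repeat split; auto. exists 0. exact HG.
    - replace (Derive (fun w => G w) (z u0)) with 0
        by (symmetry; apply is_derive_unique, HG).
      change (Derive (fun w => b w) u0) with (Derive b u0). ring. }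
  assert (Hh0 : is_derive h u0 0).
  { apply (is_derive_ext_loc (fun _ => 0)); [|auto_derive; auto].
    exists (mkposreal eps Heps). intros u Hu. symmetry. apply Hbranch, Hu. }
  pose proof (is_derive_unique _ _ _ Hh) as E.
  rewrite (is_derive_unique _ _ _ Hh0) in E.
  destruct (Rmult_integral _ _ (eq_sym E)); [lra | contradiction].
Qed.

Lemma saddle_node_branch_derive (S : R -> R) (d Kx Kz k sigma rho l : R)
    (z b : R -> R) (u0 eps : R) :
  0 < Kx -> 0 < Kz -> 0 < sigma -> (forall x, ex_derive S x) ->
  ex_derive z u0 -> ex_derive b u0 -> 0 < eps ->
  (forall u, Rabs (u - u0) < eps ->
     saddle_node S d u Kx Kz k sigma rho l (z u) (b u)) ->
  Derive b u0 = - S (z u0).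
Proof.
  intros HKx HKz Hsigma HS Hz Hb Heps Hsn.
  assert (Hsn0 := Hsn u0 ltac:(rewrite Rminus_eq_0, Rabs_R0; lra)).
  apply (implicit_branch_derive
           (fun w => g S w d u0 (b u0) Kx Kz k sigma rho l) S
           (input_gain Kx Kz sigma) z b u0 eps); auto.
  - destruct Hsn0 as [_ [Hcrit _]]. rewrite <- Hcrit.
    apply Derive_correct, ex_derive_g; auto.
  - apply ex_derive_input_gain; lra.
  - apply Rgt_not_eq, input_gain_pos; lra.
  - intros u Hu. rewrite <- (g_shift S (z u) d u (b u)); auto.
    apply (Hsn u Hu).
Qed.

Theorem theorem2 (S : R -> R) (d Kz Kx k sigma l rho : R) :
  0 < d -> 0 < Kz -> 0 < Kx -> 0 < k -> 0 < sigma -> 0 < l -> 0 <= rho ->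
  saturating_sigmoid S ->
  exists delta : R, 0 < delta /\
    forall u0 : R, d < u0 < d + delta ->
      (forall (z1 b1 : R -> R),
         ex_derive z1 u0 -> ex_derive b1 u0 ->
         (exists eps : R, 0 < eps /\
            forall u, Rabs (u - u0) < eps ->
              saddle_node S d u Kx Kz k sigma rho l (z1 u) (b1 u) /\
              0 < z1 u /\ b1 u < 0) ->
         Derive b1 u0 < 0) /\
      (forall (z2 b2 : R -> R),
         ex_derive z2 u0 -> ex_derive b2 u0 ->
         (exists eps : R, 0 < eps /\
            forall u, Rabs (u - u0) < eps ->
              saddle_node S d u Kx Kz k sigma rho l (z2 u) (b2 u) /\
              z2 u < 0 /\ 0 < b2 u) ->
         0 < Derive b2 u0).
Proof.
  intros _ HKz HKx _ Hsigma _ _ HS.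
  assert (HS' : forall x, ex_derive S x) by (intro x; apply (proj1 HS 1%nat x)).
  assert (HS0 : S 0 = 0) by apply HS.
  assert (Hcentre : forall u0 eps, 0 < eps -> Rabs (u0 - u0) < eps)
    by (intros; rewrite Rminus_eq_0, Rabs_R0; lra).
  exists 1. split; [lra|]. intros u0 _. split.
  - intros z1 b1 Hz Hb [eps [Heps Hbranch]].
    destruct (Hbranch u0 (Hcentre u0 eps Heps)) as [_ [Hpos _]].
    rewrite (saddle_node_branch_derive S d Kx Kz k sigma rho l z1 b1 u0 eps); auto.
    + pose proof (saturating_sigmoid_increasing S 0 (z1 u0) HS Hpos). lra.
    + intros u Hu. apply Hbranch, Hu.
  - intros z2 b2 Hz Hb [eps [Heps Hbranch]].
    destruct (Hbranch u0 (Hcentre u0 eps Heps)) as [_ [Hneg _]].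
    rewrite (saddle_node_branch_derive S d Kx Kz k sigma rho l z2 b2 u0 eps); auto.
    + pose proof (saturating_sigmoid_increasing S (z2 u0) 0 HS Hneg). lra.
    + intros u Hu. apply Hbranch, Hu.
Qed.
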